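(* Let $f:S^{1}\rightarrow Y_{1}$ be any map. Then $f$ is inessential (null-homotopic) in $HA$ if and only if there exists $N$ such that $f$ is inessential in $Y^{N}$.
   Context: For $n\in\{1,2,3,\dots\}$ let $X_{n}\subset\mathbb{R}^{2}$ be the circle of radius $\frac{1}{n}$ centered at $(\frac{1}{n},0)$, and let $Y_{n}=\bigcup_{i=n}^{\infty}X_{i}$ (so $Y_1$ is the Hawaiian earring). Let $A_{n}\subset\mathbb{R}^{2}$ be the closed pinched annulus bounded by $X_{n}\cup X_{n+1}$, and let $Y^{n}=Y_{1}\cup A_{1}\cup\dots\cup A_{n}$ with the subspace topology from $\mathbb{R}^{2}$. The harmonic archipelago $HA$ has underlying set $\bigcup_{n=1}^{\infty}Y^{n}$, with a topology such that each $Y^{n}$ inherits its usual (Euclidean subspace) topology and moreover: (1) there is a sequence $z_{n}\in\operatorname{int}(A_{n})$ such that $\{z_{1},z_{2},\dots\}$ has no subsequential limit in $HA$, and (2) if $p\in HA$ is a subsequential limit of a sequence $y_{1},y_{2},\dots$ with $y_{n}\in\operatorname{int}(A_{n})$ for all $n$, then $p=(0,0)$. Here $Y_1\subset Y^N\subset HA$. *)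

From Stdlib Require Import Reals Lra.
Open Scope R_scope.

Definition pt := (R * R)%type.
Definition pt3 := ((R * R) * R)%type.

Definition dist2 (p q : pt) : R :=
  sqrt ((fst p - fst q)^2 + (snd p - snd q)^2).
Definition dist3 (x y : pt3) : R :=
  sqrt ((fst (fst x) - fst (fst y))^2 + (snd (fst x) - snd (fst y))^2
        + (snd x - snd y)^2).

Definition X (n : nat) (p : pt) : Prop :=
  (fst p - / INR n)^2 + (snd p)^2 = (/ INR n)^2.

Definition Y (n : nat) (p : pt) : Prop := exists i, (n <= i)%nat /\ (1 <= i)%nat /\ X i p.

Definition A (n : nat) (p : pt) : Prop :=
  (fst p - / INR n)^2 + (snd p)^2 <= (/ INR n)^2 /\
  (/ INR (S n))^2 <= (fst p - / INR (S n))^2 + (snd p)^2.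

Definition intA (n : nat) (p : pt) : Prop :=
  (fst p - / INR n)^2 + (snd p)^2 < (/ INR n)^2 /\
  (/ INR (S n))^2 < (fst p - / INR (S n))^2 + (snd p)^2.

Definition Yup (N : nat) (p : pt) : Prop :=
  Y 1 p \/ exists i, (1 <= i)%nat /\ (i <= N)%nat /\ A i p.

Definition HAset (p : pt) : Prop := exists N, (1 <= N)%nat /\ Yup N p.

Definition is_topology_on (S : pt -> Prop) (O : (pt -> Prop) -> Prop) : Prop :=
  (forall U, O U -> forall p, U p -> S p) /\
  O (fun _ => False) /\ O S /\
  (forall U V, O U -> O V -> O (fun p => U p /\ V p)) /\
  (forall F : (pt -> Prop) -> Prop, (forall U, F U -> O U) ->
     O (fun p => exists U, F U /\ U p)).

Definition euc_rel_open (S V : pt -> Prop) : Prop :=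
  (forall p, V p -> S p) /\
  forall p, V p -> exists e, 0 < e /\ forall q, S q -> dist2 p q < e -> V q.

Definition inherits_euclidean (O : (pt -> Prop) -> Prop) (S : pt -> Prop) : Prop :=
  forall V : pt -> Prop, (forall p, V p -> S p) ->
    ((exists U, O U /\ forall p, V p <-> (U p /\ S p)) <-> euc_rel_open S V).

Definition subseq_limit (O : (pt -> Prop) -> Prop) (z : nat -> pt) (p : pt) : Prop :=
  exists phi : nat -> nat, (1 <= phi 0%nat)%nat /\
    (forall k, (phi k < phi (S k))%nat) /\
    forall U, O U -> U p -> exists K, forall k, (K <= k)%nat -> U (z (phi k)).

Definition HA_cond1 (O : (pt -> Prop) -> Prop) : Prop :=
  exists z : nat -> pt, (forall n, (1 <= n)%nat -> intA n (z n)) /\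
    forall p, HAset p -> ~ subseq_limit O z p.

Definition HA_cond2 (O : (pt -> Prop) -> Prop) : Prop :=
  forall (y : nat -> pt) (p : pt), (forall n, (1 <= n)%nat -> intA n (y n)) ->
    HAset p -> subseq_limit O y p -> p = (0, 0).

Definition HA_topology (O : (pt -> Prop) -> Prop) : Prop :=
  is_topology_on HAset O /\
  (forall n, (1 <= n)%nat -> inherits_euclidean O (Yup n)) /\
  HA_cond1 O /\ HA_cond2 O.

Definition S1 (z : pt) : Prop := (fst z)^2 + (snd z)^2 = 1.
Definition cyl (x : pt3) : Prop := S1 (fst x) /\ 0 <= snd x <= 1.

Definition cont_S1 (f : pt -> pt) : Prop :=
  forall z, S1 z -> forall e, 0 < e -> exists d, 0 < d /\
    forall w, S1 w -> dist2 z w < d -> dist2 (f z) (f w) < e.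

Definition cont_cyl_euc (H : pt3 -> pt) : Prop :=
  forall x, cyl x -> forall e, 0 < e -> exists d, 0 < d /\
    forall y, cyl y -> dist3 x y < d -> dist2 (H x) (H y) < e.

Definition cont_cyl_top (O : (pt -> Prop) -> Prop) (H : pt3 -> pt) : Prop :=
  forall U, O U -> forall x, cyl x -> U (H x) -> exists d, 0 < d /\
    forall y, cyl y -> dist3 x y < d -> U (H y).

Definition inessential_euc (S : pt -> Prop) (f : pt -> pt) : Prop :=
  exists (H : pt3 -> pt) (c : pt), S c /\ cont_cyl_euc H /\
    (forall x, cyl x -> S (H x)) /\
    (forall z, S1 z -> H (z, 0) = f z) /\
    (forall z, S1 z -> H (z, 1) = c).

Definition inessential_HA (O : (pt -> Prop) -> Prop) (f : pt -> pt) : Prop :=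
  exists (H : pt3 -> pt) (c : pt), HAset c /\ cont_cyl_top O H /\
    (forall x, cyl x -> HAset (H x)) /\
    (forall z, S1 z -> H (z, 0) = f z) /\
    (forall z, S1 z -> H (z, 1) = c).

From Stdlib Require Import Reals Lra Lia Psatz Arith ClassicalEpsilon.
From Coquelicot Require Import Coquelicot.
Open Scope R_scope.

(* If f is null-homotopic in Y^N, the homotopy is also continuous into HA, because Y^N
   carries its Euclidean topology.  Conversely, let H be a null-homotopy of f in HA.
   Condition (2) forces H to be continuous for the Euclidean topology of the plane, and
   condition (1) together with the compactness of S^1 x [0,1] gives an N such that H misses
   the points z_k for k > N.  Now HA minus {z_k | k > N} retracts onto Y^N: the inversion
   q |-> q / |q|^2 turns the circle X_n into the line u = n/2 and the annulus A_k into the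
   strip k/2 <= u <= (k+1)/2, which, punctured at the image of z_k, retracts onto its two
   boundary lines by projecting from the puncture.  These retractions move points near the
   origin very little, since A_k lies in the disk of radius 2/k, so they glue to a
   continuous map fixing Y_1, and composing it with H gives a null-homotopy of f in Y^N. *)

(** * The Euclidean plane *)

Lemma dist2_nonneg p q : 0 <= dist2 p q.
Proof. apply sqrt_pos. Qed.

Lemma dist2_sqr p q : dist2 p q * dist2 p q = (fst p - fst q)^2 + (snd p - snd q)^2.
Proof.
  apply sqrt_sqrt.
  pose proof (pow2_ge_0 (fst p - fst q)); pose proof (pow2_ge_0 (snd p - snd q)); lra.
Qed.

Lemma dist2_refl p : dist2 p p = 0.
Proof. unfold dist2; rewrite !Rminus_diag, pow_i, Rplus_0_r by lia; exact sqrt_0. Qed.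

Lemma dist2_triangle p q r : dist2 p r <= dist2 p q + dist2 q r.
Proof. unfold dist2; rewrite <- !Rsqr_pow2; apply triangle. Qed.

Lemma dist2_lt_of_sqr p q e : 0 < e ->
  (fst p - fst q)^2 + (snd p - snd q)^2 < e * e -> dist2 p q < e.
Proof. intros. pose proof (dist2_sqr p q); pose proof (dist2_nonneg p q); nra. Qed.

Lemma Rabs_fst_le_dist2 p q : Rabs (fst p - fst q) <= dist2 p q.
Proof.
  pose proof (dist2_sqr p q); pose proof (dist2_nonneg p q); pose proof (pow2_ge_0 (snd p - snd q)).
  apply Rabs_le; split; nra.
Qed.

Lemma Rabs_snd_le_dist2 p q : Rabs (snd p - snd q) <= dist2 p q.
Proof.
  pose proof (dist2_sqr p q); pose proof (dist2_nonneg p q); pose proof (pow2_ge_0 (fst p - fst q)).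
  apply Rabs_le; split; nra.
Qed.

Lemma dist2_le_Rabs p q : dist2 p q <= Rabs (fst p - fst q) + Rabs (snd p - snd q).
Proof.
  pose proof (dist2_sqr p q); pose proof (dist2_nonneg p q).
  pose proof (pow2_abs (fst p - fst q)); pose proof (pow2_abs (snd p - snd q)).
  pose proof (Rabs_pos (fst p - fst q)); pose proof (Rabs_pos (snd p - snd q)); nra.
Qed.

Lemma dist3_le_Rabs x y : dist3 x y <=
  Rabs (fst (fst x) - fst (fst y)) + Rabs (snd (fst x) - snd (fst y)) + Rabs (snd x - snd y).
Proof.
  unfold dist3.
  rewrite <- (pow2_abs (fst (fst x) - _)), <- (pow2_abs (snd (fst x) - _)),
    <- (pow2_abs (snd x - _)).
  pose proof (Rabs_pos (fst (fst x) - fst (fst y))).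
  pose proof (Rabs_pos (snd (fst x) - snd (fst y))). pose proof (Rabs_pos (snd x - snd y)).
  rewrite <- sqrt_pow2 by lra. apply sqrt_le_1_alt. nra.
Qed.

Lemma dist2_origin_le_disk q r : 0 < r -> (fst q - r)^2 + (snd q)^2 <= r^2 ->
  dist2 (0,0) q <= 2 * r.
Proof.
  intros Hr Hq. pose proof (dist2_sqr (0,0) q); pose proof (dist2_nonneg (0,0) q); simpl in *.
  assert (fst q <= 2 * r) by nra.
  assert (dist2 (0,0) q * dist2 (0,0) q <= 2 * r * (2 * r)) by nra.
  nra.
Qed.

Definition cont_at (g : pt -> pt) (p : pt) : Prop :=
  forall e, 0 < e -> exists d, 0 < d /\ forall q, dist2 p q < d -> dist2 (g p) (g q) < e.

Lemma continuous_eps (g : pt -> R) p : continuous g p ->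
  forall e, 0 < e -> exists d, 0 < d /\ forall q, dist2 p q < d -> Rabs (g q - g p) < e.
Proof.
  intros Hc e He.
  destruct (Hc _ (locally_ball (g p) (mkposreal e He))) as [d Hd].
  exists d; split; [apply cond_pos|]. intros q Hq. apply Hd.
  pose proof (Rabs_fst_le_dist2 p q); pose proof (Rabs_snd_le_dist2 p q).
  rewrite Rabs_minus_sym in *. unfold Rminus in *.
  split; cbn; unfold AbsRing_ball, abs, minus, plus, opp; cbn; lra.
Qed.

Lemma continuous_stays_between (g : pt -> R) p lo hi : continuous g p -> lo < g p < hi ->
  exists d, 0 < d /\ forall q, dist2 p q < d -> lo < g q < hi.
Proof.
  intros Hc Hp. destruct (continuous_eps g p Hc (Rmin (g p - lo) (hi - g p))) as [d [Hd P]].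
  { apply Rmin_pos; lra. }
  exists d; split; [exact Hd|]. intros q Hq. specialize (P q Hq). apply Rabs_def2 in P.
  pose proof (Rmin_l (g p - lo) (hi - g p)); pose proof (Rmin_r (g p - lo) (hi - g p)); lra.
Qed.

Lemma cont_at_components (g : pt -> pt) p : continuous (fun q => fst (g q)) p ->
  continuous (fun q => snd (g q)) p -> cont_at g p.
Proof.
  intros H1 H2 e He.
  destruct (continuous_eps _ _ H1 (e/2)) as [d1 [Hd1 P1]]; [lra|].
  destruct (continuous_eps _ _ H2 (e/2)) as [d2 [Hd2 P2]]; [lra|].
  exists (Rmin d1 d2); split; [apply Rmin_pos; assumption|]. intros q Hq.
  pose proof (Rmin_l d1 d2); pose proof (Rmin_r d1 d2).
  specialize (P1 q ltac:(lra)); specialize (P2 q ltac:(lra)).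
  pose proof (dist2_le_Rabs (g p) (g q)). rewrite Rabs_minus_sym in P1, P2. lra.
Qed.

Lemma cont_at_id p : cont_at (fun q => q) p.
Proof. intros e He. exists e. auto. Qed.

Lemma cont_at_glue (g g1 g2 : pt -> pt) p : cont_at g1 p -> cont_at g2 p -> g1 p = g2 p ->
  (exists d, 0 < d /\ forall q, dist2 p q < d -> g q = g1 q \/ g q = g2 q) -> cont_at g p.
Proof.
  intros C1 C2 E12 [d0 [Hd0 Hg]] e He.
  destruct (C1 e He) as [d1 [Hd1 P1]]. destruct (C2 e He) as [d2 [Hd2 P2]].
  assert (Ep : g p = g1 p) by (destruct (Hg p) as [E|E]; rewrite ?dist2_refl; congruence).
  exists (Rmin d0 (Rmin d1 d2)); split; [repeat apply Rmin_pos; assumption|].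
  intros q Hq. pose proof (Rmin_l d0 (Rmin d1 d2)); pose proof (Rmin_r d0 (Rmin d1 d2)).
  pose proof (Rmin_l d1 d2); pose proof (Rmin_r d1 d2).
  destruct (Hg q ltac:(lra)) as [E|E]; rewrite Ep, E; [|rewrite E12]; [apply P1|apply P2]; lra.
Qed.

Lemma cont_at_if (s : pt -> R) (g1 g2 : pt -> pt) p : continuous s p ->
  cont_at g1 p -> cont_at g2 p -> (s p = 0 -> g1 p = g2 p) ->
  cont_at (fun q => if Rle_dec 0 (s q) then g1 q else g2 q) p.
Proof.
  intros Cs C1 C2 E.
  destruct (Rtotal_order (s p) 0) as [Hs|[Hs|Hs]].
  - destruct (continuous_stays_between s p (s p - 1) 0 Cs) as [d [Hd P]]; [lra|].
    apply (cont_at_glue _ g2 g2); [assumption..|reflexivity|].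
    exists d; split; [assumption|]. intros q Hq. specialize (P q Hq).
    destruct (Rle_dec 0 (s q)); [lra|auto].
  - apply (cont_at_glue _ g1 g2); auto.
    exists 1; split; [lra|]. intros q _. destruct (Rle_dec 0 (s q)); auto.
  - destruct (continuous_stays_between s p 0 (s p + 1) Cs) as [d [Hd P]]; [lra|].
    apply (cont_at_glue _ g1 g1); [assumption..|reflexivity|].
    exists d; split; [assumption|]. intros q Hq. specialize (P q Hq).
    destruct (Rle_dec 0 (s q)); [auto|lra].
Qed.

Section RealContinuity.
Variables (f g : pt -> R) (p : pt).
Hypotheses (Hf : continuous f p) (Hg : continuous g p).

Lemma continuous_Rplus : continuous (fun q => f q + g q) p.
Proof. exact (continuous_plus f g p Hf Hg). Qed.

Lemma continuous_Rmult : continuous (fun q => f q * g q) p.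
Proof. exact (continuous_mult f g p Hf Hg). Qed.

Lemma continuous_Rminus : continuous (fun q => f q - g q) p.
Proof. exact (continuous_minus f g p Hf Hg). Qed.

Lemma continuous_Rdiv : g p <> 0 -> continuous (fun q => f q / g q) p.
Proof.
  intros Hg0. apply (continuous_mult f (fun q => / g q) p Hf).
  exact (continuous_comp g Rinv p Hg (continuous_Rinv (g p) Hg0)).
Qed.

End RealContinuity.

Lemma continuous_const_pt (c : R) (p : pt) : continuous (fun _ : pt => c) p.
Proof. apply continuous_const. Qed.

Lemma continuous_fst_pt (p : pt) : continuous (fun q : pt => fst q) p.
Proof. destruct p; apply continuous_fst. Qed.

Lemma continuous_snd_pt (p : pt) : continuous (fun q : pt => snd q) p.
Proof. destruct p; apply continuous_snd. Qed.

Ltac solve_continuous := repeat lazymatch goal with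
  | |- continuous (fun q => _ / _) _ => apply continuous_Rdiv
  | |- continuous (fun q => _ + _) _ => apply continuous_Rplus
  | |- continuous (fun q => _ - _) _ => apply continuous_Rminus
  | |- continuous (fun q => _ * _) _ => apply continuous_Rmult
  | |- continuous fst _ => apply continuous_fst_pt
  | |- continuous snd _ => apply continuous_snd_pt
  | |- continuous _ _ => first [assumption | apply continuous_const_pt]
  end.

Lemma finite_delta (P : nat -> R -> Prop) :
  (forall k d d', 0 < d' <= d -> P k d -> P k d') -> (forall k, exists d, 0 < d /\ P k d) ->
  forall K, exists d, 0 < d /\ forall k, (k < K)%nat -> P k d.
Proof.
  intros Hmono Hex K. induction K as [|K [d1 [Hd1 P1]]].
  - exists 1. split; [lra|]. intros k Hk. lia.
  - destruct (Hex K) as [d2 [Hd2 P2]].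
    exists (Rmin d1 d2). split; [apply Rmin_pos; assumption|].
    pose proof (Rmin_l d1 d2); pose proof (Rmin_r d1 d2); pose proof (Rmin_pos d1 d2 Hd1 Hd2).
    intros k Hk. destruct (Nat.eq_dec k K) as [->|Hne].
    + apply (Hmono K d2); [lra|assumption].
    + apply (Hmono k d1); [lra|]. apply P1. lia.
Qed.

(** * Inversion *)

Definition sqnorm (q : pt) : R := fst q * fst q + snd q * snd q.
Definition inv_u (q : pt) : R := fst q / sqnorm q.
Definition inv_v (q : pt) : R := snd q / sqnorm q.

Lemma sqnorm_pos q : q <> (0,0) -> 0 < sqnorm q.
Proof.
  destruct q as [x y]; unfold sqnorm; cbn; intros Hq.
  destruct (Req_dec x 0); [destruct (Req_dec y 0); [subst; easy|]|]; nra.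
Qed.

Lemma sqnorm_dist2 q : dist2 (0,0) q * dist2 (0,0) q = sqnorm q.
Proof. rewrite dist2_sqr; unfold sqnorm; cbn; ring. Qed.

Definition inversion (q : pt) : pt := (inv_u q, inv_v q).

Lemma sqnorm_inversion q : q <> (0,0) -> sqnorm (inversion q) = / sqnorm q.
Proof.
  intros Hq. pose proof (sqnorm_pos q Hq). unfold inversion, inv_u, inv_v, sqnorm in *; cbn.
  field. lra.
Qed.

Lemma inversion_involutive q : q <> (0,0) -> inversion (inversion q) = q.
Proof.
  intros Hq. pose proof (sqnorm_pos q Hq). unfold inversion at 1, inv_u at 1, inv_v at 1.
  rewrite sqnorm_inversion by assumption. destruct q as [x y].
  unfold inversion, inv_u, inv_v, sqnorm in *; cbn in *. f_equal; field; lra.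
Qed.

Lemma continuous_inv_u q : q <> (0,0) -> continuous inv_u q.
Proof.
  intros Hq. pose proof (sqnorm_pos q Hq). unfold inv_u, sqnorm in *. solve_continuous; lra.
Qed.

Lemma continuous_inv_v q : q <> (0,0) -> continuous inv_v q.
Proof.
  intros Hq. pose proof (sqnorm_pos q Hq). unfold inv_v, sqnorm in *. solve_continuous; lra.
Qed.

Lemma sqnorm_inversion_large M : 0 <= M -> exists d, 0 < d /\
  forall q, q <> (0,0) -> dist2 (0,0) q < d -> M < sqnorm (inversion q).
Proof.
  intros HM. exists (/ (M + 1)); split; [apply Rinv_0_lt_compat; lra|].
  intros q Hq Hd. rewrite sqnorm_inversion by assumption.
  pose proof (sqnorm_pos q Hq); pose proof (sqnorm_dist2 q); pose proof (dist2_nonneg (0,0) q).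
  assert (dist2 (0,0) q * (M + 1) < 1).
  { apply (Rmult_lt_compat_r (M + 1)) in Hd; [|lra]. rewrite Rinv_l in Hd; lra. }
  assert (Hs : sqnorm q * (M + 1) < 1) by nra.
  apply (Rmult_lt_reg_l (sqnorm q)); [lra|]. rewrite Rinv_r; nra.
Qed.

Lemma inv_v_large V C : 0 <= V -> 0 <= C -> exists d, 0 < d /\
  forall q, q <> (0,0) -> Rabs (inv_u q) <= C -> dist2 (0,0) q < d -> V < Rabs (inv_v q).
Proof.
  intros HV HC. destruct (sqnorm_inversion_large ((V + C)^2) (pow2_ge_0 _)) as [d [Hd Hlarge]].
  exists d; split; [assumption|]. intros q Hq Hu Hdq.
  specialize (Hlarge q Hq Hdq). unfold sqnorm, inversion in Hlarge; cbn in Hlarge.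
  pose proof (pow2_abs (inv_u q)); pose proof (pow2_abs (inv_v q)).
  pose proof (Rabs_pos (inv_u q)); pose proof (Rabs_pos (inv_v q)).
  destruct (Rlt_le_dec V (Rabs (inv_v q))) as [|Hle]; [assumption|].
  assert (Rabs (inv_u q) ^ 2 <= C ^ 2) by (apply pow_incr; lra).
  assert (Rabs (inv_v q) ^ 2 <= V ^ 2) by (apply pow_incr; lra).
  assert (0 <= V * C) by (apply Rmult_le_pos; assumption). nra.
Qed.

Lemma circle_gap q n : q <> (0,0) -> 0 < INR n ->
  (fst q - / INR n)^2 + (snd q)^2 - (/ INR n)^2
  = sqnorm q * (2 / INR n) * (INR n / 2 - inv_u q).
Proof. intros Hq Hn. pose proof (sqnorm_pos q Hq). unfold inv_u, sqnorm in *. field. lra. Qed.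

Lemma circle_gap_factor_pos q n : q <> (0,0) -> 0 < INR n -> 0 < sqnorm q * (2 / INR n).
Proof.
  intros Hq Hn. pose proof (sqnorm_pos q Hq).
  apply Rmult_lt_0_compat; [|apply Rdiv_lt_0_compat]; lra.
Qed.

Lemma closed_disk_iff q n : q <> (0,0) -> 0 < INR n ->
  ((fst q - / INR n)^2 + (snd q)^2 <= (/ INR n)^2 <-> INR n / 2 <= inv_u q).
Proof.
  intros Hq Hn. pose proof (circle_gap q n Hq Hn); pose proof (circle_gap_factor_pos q n Hq Hn).
  split; nra.
Qed.

Lemma open_disk_iff q n : q <> (0,0) -> 0 < INR n ->
  ((fst q - / INR n)^2 + (snd q)^2 < (/ INR n)^2 <-> INR n / 2 < inv_u q).
Proof.
  intros Hq Hn. pose proof (circle_gap q n Hq Hn); pose proof (circle_gap_factor_pos q n Hq Hn).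
  split; nra.
Qed.

Lemma X_iff q n : q <> (0,0) -> 0 < INR n -> (X n q <-> inv_u q = INR n / 2).
Proof.
  intros Hq Hn. unfold X.
  pose proof (circle_gap q n Hq Hn); pose proof (circle_gap_factor_pos q n Hq Hn).
  split; intro; [|nra]. apply Rminus_diag_uniq_sym.
  apply (Rmult_eq_reg_l (sqnorm q * (2 / INR n))); lra.
Qed.

Lemma intA_nonzero n q : intA n q -> q <> (0,0).
Proof. intros [_ H2] ->. cbn in H2. lra. Qed.

Lemma intA_inv_u n q : (1 <= n)%nat -> intA n q -> INR n / 2 < inv_u q < INR (S n) / 2.
Proof.
  intros Hn Hq. pose proof (intA_nonzero n q Hq) as Hq0. destruct Hq as [H1 H2].
  assert (0 < INR n) by (apply lt_0_INR; lia). assert (0 < INR (S n)) by (apply lt_0_INR; lia).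
  split; [now apply open_disk_iff|].
  destruct (Rlt_le_dec (inv_u q) (INR (S n) / 2)) as [|Hle]; [assumption|].
  apply closed_disk_iff in Hle; [lra|assumption..].
Qed.

Lemma A_inv_u n q : (1 <= n)%nat -> A n q -> q <> (0,0) -> INR n / 2 <= inv_u q.
Proof. intros Hn [H1 _] Hq. apply closed_disk_iff; [|apply lt_0_INR; lia|]; assumption. Qed.

Lemma disk_norm_le n q : (1 <= n)%nat ->
  (fst q - / INR n)^2 + (snd q)^2 <= (/ INR n)^2 -> dist2 (0,0) q <= 2 / INR n.
Proof.
  intros Hn Hq. assert (0 < INR n) by (apply lt_0_INR; lia).
  pose proof (dist2_origin_le_disk q (/ INR n) ltac:(apply Rinv_0_lt_compat; lra) Hq).
  unfold Rdiv; lra.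
Qed.

Lemma two_div_INR_le m n : (1 <= n)%nat -> (n <= m)%nat -> 2 / INR m <= 2 / INR n.
Proof.
  intros Hn Hnm. assert (0 < INR n) by (apply lt_0_INR; lia).
  assert (INR n <= INR m) by (apply le_INR; lia).
  unfold Rdiv. apply Rmult_le_compat_l; [lra|]. apply Rinv_le_contravar; lra.
Qed.

Lemma two_div_INR_small e : 0 < e ->
  exists K, (1 <= K)%nat /\ forall m, (K <= m)%nat -> 2 / INR m < e.
Proof.
  intros He. destruct (archimed_cor1 (e / 2)) as [K [HK1 HK2]]; [lra|].
  exists K. split; [lia|]. intros m Hm. pose proof (two_div_INR_le m K ltac:(lia) Hm).
  unfold Rdiv in *. lra.
Qed.

Definition strip (q : pt) : nat := (Z.to_nat (up (2 * inv_u q)) - 1)%nat.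

Lemma strip_le_iff q n : (strip q <= n)%nat <-> 2 * inv_u q < INR n + 1.
Proof.
  unfold strip. destruct (archimed (2 * inv_u q)) as [A1 A2].
  assert (E : (Z.to_nat (up (2 * inv_u q)) - 1 <= n)%nat <-> (up (2 * inv_u q) <= Z.of_nat n + 1)%Z)
    by lia.
  rewrite E, INR_IZR_INZ. split; intro H.
  - apply IZR_le in H. rewrite plus_IZR in H. lra.
  - assert (up (2 * inv_u q) < Z.of_nat n + 2)%Z by (apply lt_IZR; rewrite plus_IZR; lra). lia.
Qed.

Lemma strip_bounds q : (0 < strip q)%nat -> INR (strip q) <= 2 * inv_u q < INR (strip q) + 1.
Proof.
  intros Hpos. split; [|apply strip_le_iff; lia].
  destruct (Rle_lt_dec (INR (strip q)) (2 * inv_u q)) as [|Hlt]; [assumption|].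
  assert (strip q <= strip q - 1)%nat by (apply strip_le_iff; rewrite minus_INR by lia; cbn; lra).
  lia.
Qed.

Lemma strip_eq q n : INR n <= 2 * inv_u q < INR n + 1 -> strip q = n.
Proof.
  intros [H1 H2]. apply strip_le_iff in H2. destruct n as [|n]; [lia|].
  assert (~ (strip q <= n)%nat) by (rewrite strip_le_iff, <- S_INR; lra). lia.
Qed.

(* In inverted coordinates, the ray from [(c - h, b)] in direction [(s, t)] meets the line
   [u = c] at [(c, b + h t / s)]; [ray_hit c b h s t] is the inversion of that point, with
   [s^2] cleared from numerator and denominator, so that [s = 0] (the ray escaping to
   infinity) gives the origin. *)
Definition ray_den (c b h s t : R) : R := c * c * (s * s) + (b * s + h * t) * (b * s + h * t).
Definition ray_hit (c b h s t : R) : pt :=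
  (c * (s * s) / ray_den c b h s t, s * (b * s + h * t) / ray_den c b h s t).

Lemma ray_den_pos c b h s t : c <> 0 -> h <> 0 -> s <> 0 \/ t <> 0 -> 0 < ray_den c b h s t.
Proof.
  intros Hc Hh Hst. unfold ray_den.
  destruct (Req_dec s 0) as [->|Hs].
  - destruct Hst as [|Ht]; [lra|].
    assert (0 < h * t * (h * t)) by (apply Rsqr_pos_lt, Rmult_integral_contrapositive; auto). nra.
  - assert (0 < c * c) by (apply Rsqr_pos_lt; assumption).
    assert (0 < s * s) by (apply Rsqr_pos_lt; assumption).
    pose proof (Rle_0_sqr (b * s + h * t)). unfold Rsqr in *. nra.
Qed.

Lemma ray_hit_origin c b h t : ray_hit c b h 0 t = (0,0).
Proof. unfold ray_hit. f_equal; unfold Rdiv; ring. Qed.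

Lemma cont_at_ray_hit c b h (s t : pt -> R) p : continuous s p -> continuous t p ->
  c <> 0 -> h <> 0 -> s p <> 0 \/ t p <> 0 -> cont_at (fun q => ray_hit c b h (s q) (t q)) p.
Proof.
  intros Hs Ht Hc Hh Hst. pose proof (ray_den_pos c b h (s p) (t p) Hc Hh Hst).
  apply cont_at_components; unfold ray_hit, ray_den in *; cbn; solve_continuous; lra.
Qed.

Lemma ray_hit_on_line c b s t : c <> 0 -> s <> 0 -> ray_hit c b s s t = inversion (c, b + t).
Proof.
  intros Hc Hs. assert (0 < c * c) by (apply Rsqr_pos_lt; assumption).
  assert (0 < s * s) by (apply Rsqr_pos_lt; assumption).
  pose proof (Rle_0_sqr (b + t)). unfold Rsqr in *.
  unfold ray_hit, ray_den, inversion, inv_u, inv_v, sqnorm; cbn. f_equal; field; nra.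
Qed.

Lemma ray_hit_X n c b h s t : (1 <= n)%nat -> c = INR n / 2 -> h <> 0 -> X n (ray_hit c b h s t).
Proof.
  intros Hn Hc Hh. unfold X. assert (0 < INR n) by (apply lt_0_INR; lia).
  destruct (Req_dec s 0) as [->|Hs].
  - rewrite ray_hit_origin. cbn. field. lra.
  - pose proof (ray_den_pos c b h s t ltac:(lra) Hh (or_introl Hs)).
    unfold ray_hit, ray_den in *. cbn. replace (INR n) with (2 * c) by lra. field. lra.
Qed.

Lemma ray_hit_small c b h s t e : 0 < e -> Rabs s < / 2 -> / (2 * e) < Rabs (b * s + h * t) ->
  dist2 (0,0) (ray_hit c b h s t) < e.
Proof.
  intros He Hs Hw. destruct (Req_dec s 0) as [->|Hs0].
  { rewrite ray_hit_origin, dist2_refl. assumption. }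
  pose proof (pow2_abs (b * s + h * t)); pose proof (pow2_abs s); pose proof (Rabs_pos s).
  assert (Hi : 0 < / (2 * e)) by (apply Rinv_0_lt_compat; lra).
  assert (Hw2 : (/ (2 * e))^2 < (b * s + h * t)^2) by nra.
  assert (Hs2 : s^2 < / 4) by nra.
  assert (HD : (b * s + h * t)^2 <= ray_den c b h s t) by (unfold ray_den; nra).
  assert (HD0 : 0 < ray_den c b h s t) by (pose proof (pow_lt _ 2 Hi); lra).
  assert (E : e * e * (/ (2 * e))^2 = / 4) by (field; lra).
  apply dist2_lt_of_sqr; [assumption|].
  replace ((fst (0,0) - fst (ray_hit c b h s t))^2 + (snd (0,0) - snd (ray_hit c b h s t))^2)
    with (s^2 / ray_den c b h s t)
    by (unfold ray_hit; cbn; unfold ray_den in *; field; lra).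
  apply (Rmult_lt_reg_r (ray_den c b h s t)); [lra|].
  unfold Rdiv; rewrite Rmult_assoc, Rinv_l, Rmult_1_r by lra. nra.
Qed.

Lemma ray_hit_small_steep c b h s t e m : 0 < e -> 0 < m -> m <= Rabs h -> Rabs s < / 2 ->
  (/ (2 * e) + Rabs b / 2) / m < Rabs t -> dist2 (0,0) (ray_hit c b h s t) < e.
Proof.
  intros He Hm Hh Hs Ht. apply ray_hit_small; [assumption..|].
  set (T := (/ (2 * e) + Rabs b / 2) / m) in Ht.
  assert (HmT : m * T = / (2 * e) + Rabs b / 2) by (unfold T; field; lra).
  assert (HT : 0 <= T).
  { assert (0 < / (2 * e)) by (apply Rinv_0_lt_compat; lra). pose proof (Rabs_pos b).
    unfold T. apply Rdiv_le_0_compat; lra. }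
  pose proof (Rabs_triang_inv (h * t) (- (b * s))) as Htri.
  rewrite Rabs_Ropp, !Rabs_mult in Htri.
  replace (h * t - - (b * s)) with (b * s + h * t) in Htri by ring.
  pose proof (Rabs_pos b); pose proof (Rabs_pos s); pose proof (Rabs_pos t).
  assert (m * T <= Rabs h * Rabs t) by (apply Rmult_le_compat; lra).
  nra.
Qed.

(** * Retracting HA minus a tail of punctures onto Y^N *)

Section Retraction.

Variables (z : nat -> pt) (N : nat).
Hypothesis hz : forall n, (1 <= n)%nat -> intA n (z n).

Definition puncture_u (k : nat) : R := inv_u (z k).
Definition puncture_v (k : nat) : R := inv_v (z k).

Definition push_to (k : nat) (c : R) (q : pt) : pt :=
  ray_hit c (puncture_v k) (c - puncture_u k) (inv_u q - puncture_u k) (inv_v q - puncture_v k).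

Definition annulus_retract (k : nat) (q : pt) : pt :=
  if Rle_dec 0 (inv_u q - puncture_u k) then push_to k (INR (S k) / 2) q
  else push_to k (INR k / 2) q.

Lemma puncture_u_bounds k : (1 <= k)%nat -> INR k / 2 < puncture_u k < INR (S k) / 2.
Proof. intros Hk. exact (intA_inv_u k (z k) Hk (hz k Hk)). Qed.

Lemma push_to_fix k c q : q <> (0,0) -> c <> 0 -> inv_u q = c -> c <> puncture_u k ->
  push_to k c q = q.
Proof.
  intros Hq Hc Hu Ha. unfold push_to. rewrite Hu, ray_hit_on_line by lra.
  rewrite <- Hu. replace (puncture_v k + (inv_v q - puncture_v k)) with (inv_v q) by ring.
  exact (inversion_involutive q Hq).
Qed.

Lemma cont_at_push_to k c q : (1 <= k)%nat -> q <> (0,0) -> q <> z k ->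
  c <> 0 -> c <> puncture_u k -> cont_at (push_to k c) q.
Proof.
  intros Hk Hq Hqz Hc Ha. unfold push_to. apply cont_at_ray_hit; [| |assumption|lra|].
  - apply continuous_Rminus; [apply continuous_inv_u, Hq|apply continuous_const_pt].
  - apply continuous_Rminus; [apply continuous_inv_v, Hq|apply continuous_const_pt].
  - destruct (Req_dec (inv_u q - puncture_u k) 0) as [Hu|]; [right; intro Hv|left; assumption].
    apply Hqz. rewrite <- (inversion_involutive q Hq), <- (inversion_involutive (z k)).
    + f_equal. unfold inversion, puncture_u, puncture_v in *. f_equal; lra.
    + exact (intA_nonzero k (z k) (hz k Hk)).
Qed.

Lemma annulus_retract_X k q : (1 <= k)%nat ->
  X k (annulus_retract k q) \/ X (S k) (annulus_retract k q).
Proof.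
  intros Hk. pose proof (puncture_u_bounds k Hk). unfold annulus_retract, push_to.
  destruct (Rle_dec 0 _); [right|left]; apply ray_hit_X; lia || lra.
Qed.

Lemma annulus_retract_Y k q : (1 <= k)%nat -> Y 1 (annulus_retract k q).
Proof.
  intros Hk.
  destruct (annulus_retract_X k q Hk); [exists k|exists (S k)]; repeat split; lia || assumption.
Qed.

Lemma annulus_retract_norm_le k q : (1 <= k)%nat -> dist2 (0,0) (annulus_retract k q) <= 2 / INR k.
Proof.
  intros Hk. pose proof (two_div_INR_le (S k) k Hk (Nat.le_succ_diag_r k)).
  destruct (annulus_retract_X k q Hk) as [HX|HX]; unfold X in HX.
  - apply disk_norm_le; [assumption|lra].
  - pose proof (disk_norm_le (S k) (annulus_retract k q) ltac:(lia) ltac:(lra)). lra.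
Qed.

Lemma annulus_retract_fix k q : (1 <= k)%nat -> q <> (0,0) ->
  inv_u q = INR k / 2 \/ inv_u q = INR (S k) / 2 -> annulus_retract k q = q.
Proof.
  intros Hk Hq Hu. pose proof (puncture_u_bounds k Hk). assert (0 < INR k) by (apply lt_0_INR; lia).
  unfold annulus_retract. rewrite S_INR in *.
  destruct (Rle_dec 0 _); apply push_to_fix; try assumption; destruct Hu; lra.
Qed.

Lemma cont_at_annulus_retract k q : (1 <= k)%nat -> q <> (0,0) -> q <> z k ->
  cont_at (annulus_retract k) q.
Proof.
  intros Hk Hq Hqz. pose proof (puncture_u_bounds k Hk).
  assert (0 < INR k) by (apply lt_0_INR; lia).
  apply cont_at_if.
  - apply continuous_Rminus; [apply continuous_inv_u, Hq|apply continuous_const_pt].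
  - apply cont_at_push_to; lra || assumption.
  - apply cont_at_push_to; lra || assumption.
  - intros Hs. unfold push_to. rewrite Hs, !ray_hit_origin. reflexivity.
Qed.

(* Near the origin the inverted coordinate [inv_v] is large while [inv_u] stays in the
   strip, so the ray from the puncture is almost vertical and hits the boundary lines
   far away, i.e. near the origin after inversion. *)
Lemma annulus_retract_small k e : (1 <= k)%nat -> 0 < e -> exists d, 0 < d /\
  forall q, q <> (0,0) -> INR k <= 2 * inv_u q < INR k + 1 -> dist2 (0,0) q < d ->
  dist2 (0,0) (annulus_retract k q) < e.
Proof.
  intros Hk He. pose proof (puncture_u_bounds k Hk) as Ha. rewrite S_INR in Ha.
  set (a := puncture_u k) in *; set (b := puncture_v k).
  pose proof (Rmin_l (a - INR k / 2) ((INR k + 1) / 2 - a)).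
  pose proof (Rmin_r (a - INR k / 2) ((INR k + 1) / 2 - a)).
  set (m := Rmin (a - INR k / 2) ((INR k + 1) / 2 - a)) in *.
  assert (Hm : 0 < m) by (apply Rmin_pos; lra).
  set (T := (/ (2 * e) + Rabs b / 2) / m).
  assert (HT : 0 <= T).
  { pose proof (Rabs_pos b). assert (0 < / (2 * e)) by (apply Rinv_0_lt_compat; lra).
    unfold T. apply Rdiv_le_0_compat; lra. }
  pose proof (pos_INR k).
  destruct (inv_v_large (T + Rabs b) ((INR k + 1) / 2)) as [d [Hd Hlarge]];
    [pose proof (Rabs_pos b); lra|lra|].
  exists d; split; [assumption|]. intros q Hq Hstrip Hdq.
  assert (Hv : T + Rabs b < Rabs (inv_v q)) by (apply Hlarge; [|apply Rabs_le; lra|]; assumption).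
  assert (Ht : T < Rabs (inv_v q - b)) by (pose proof (Rabs_triang_inv (inv_v q) b); lra).
  assert (Hs : Rabs (inv_u q - a) < / 2) by (apply Rabs_def1; lra).
  unfold annulus_retract, push_to. fold a b.
  destruct (Rle_dec 0 _); apply (ray_hit_small_steep _ _ _ _ _ e m); try assumption.
  - rewrite S_INR, Rabs_right; lra.
  - rewrite Rabs_left; lra.
Qed.

Definition piece (j : nat) (q : pt) : pt := if (j <=? N)%nat then q else annulus_retract j q.

Definition retraction (q : pt) : pt := piece (strip q) q.

Lemma piece_fix j q : q <> (0,0) -> inv_u q = INR j / 2 \/ inv_u q = INR (S j) / 2 -> piece j q = q.
Proof.
  intros Hq Hu. unfold piece. destruct (Nat.leb_spec j N); [reflexivity|].
  apply annulus_retract_fix; [lia|assumption..].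
Qed.

Lemma cont_at_piece j q : q <> (0,0) -> ((N < j)%nat -> q <> z j) -> cont_at (piece j) q.
Proof.
  intros Hq Hz. unfold piece. destruct (Nat.leb_spec j N); [apply cont_at_id|].
  apply cont_at_annulus_retract; [lia|assumption|auto].
Qed.

Lemma retraction_eq_piece j q : (j <= N)%nat \/ INR j <= 2 * inv_u q ->
  2 * inv_u q < INR j + 1 -> retraction q = piece j q.
Proof.
  intros Hj Hlt. unfold retraction. apply strip_le_iff in Hlt.
  destruct (le_lt_dec j N) as [HjN|HjN].
  - unfold piece. replace (strip q <=? N)%nat with true by (symmetry; apply Nat.leb_le; lia).
    replace (j <=? N)%nat with true by (symmetry; apply Nat.leb_le; lia). reflexivity.
  - destruct Hj as [|Hj]; [lia|]. rewrite (strip_eq q j); [reflexivity|].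
    split; [assumption|]. apply strip_le_iff. lia.
Qed.

Lemma retraction_id_low q : 2 * inv_u q < INR N + 1 -> retraction q = q.
Proof.
  intros Hq. rewrite (retraction_eq_piece N q (or_introl (le_n N)) Hq).
  unfold piece. rewrite Nat.leb_refl. reflexivity.
Qed.

Lemma inv_u_origin : inv_u (0,0) = 0.
Proof. unfold inv_u, Rdiv. cbn. ring. Qed.

Lemma retraction_origin : retraction (0,0) = (0,0).
Proof. apply retraction_id_low. rewrite inv_u_origin. pose proof (pos_INR N). lra. Qed.

Lemma origin_Y1 : Y 1 (0,0).
Proof. exists 1%nat. repeat split; [lia..|]. unfold X. cbn. field. Qed.

Lemma retraction_fix_Y q : Y 1 q -> retraction q = q.
Proof.
  intros (i & _ & Hi & HX). destruct (classic (q = (0,0))) as [->|Hq]; [exact retraction_origin|].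
  assert (0 < INR i) by (apply lt_0_INR; lia).
  apply X_iff in HX; [|assumption..].
  rewrite (retraction_eq_piece i q); [|right; lra|lra].
  apply piece_fix; [assumption|left; assumption].
Qed.

Lemma retraction_Yup q : HAset q -> Yup N (retraction q).
Proof.
  intros (M & _ & HqM). unfold retraction, piece. destruct (Nat.leb_spec (strip q) N) as [Hs|Hs].
  - destruct HqM as [HY|(i & Hi1 & _ & HA)]; [left; assumption|].
    destruct (classic (q = (0,0))) as [->|Hq]; [left; exact origin_Y1|].
    destruct (le_lt_dec i N) as [HiN|HiN]; [right; exists i; auto|exfalso].
    pose proof (A_inv_u i q Hi1 HA Hq). apply strip_le_iff in Hs.
    apply le_INR in HiN. rewrite S_INR in HiN. lra.
  - left. apply annulus_retract_Y. lia.
Qed.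

(* Only the finitely many annuli [A k] with [k < K] need [annulus_retract_small]; the
   others lie within [2 / K] of the origin. *)
Lemma cont_at_retraction_origin : cont_at retraction (0,0).
Proof.
  intros e He. rewrite retraction_origin.
  destruct (two_div_INR_small e He) as [K [_ HKe]].
  destruct (finite_delta (fun k d => (1 <= k)%nat -> forall q, q <> (0,0) ->
    INR k <= 2 * inv_u q < INR k + 1 -> dist2 (0,0) q < d -> dist2 (0,0) (annulus_retract k q) < e))
    with (K := K) as [d [Hd Hsmall]].
  { intros k d d' Hd' Hkd Hk q Hq Hs Hdq. apply Hkd; [assumption..|lra]. }
  { intros k. destruct (le_lt_dec 1 k) as [Hk|Hk].
    - destruct (annulus_retract_small k e Hk He) as [d [Hd P]]. exists d. auto.
    - exists 1. split; [lra|]. intros. lia. }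
  exists (Rmin e d). split; [apply Rmin_pos; assumption|].
  intros q Hq. pose proof (Rmin_l e d); pose proof (Rmin_r e d).
  unfold retraction, piece. destruct (Nat.leb_spec (strip q) N) as [|HjN]; [lra|].
  set (j := strip q) in *. pose proof (strip_bounds q ltac:(lia)) as Hj. fold j in Hj.
  assert (Hq0 : q <> (0,0)).
  { intros ->. rewrite inv_u_origin in Hj. assert (1 <= INR j) by (apply (le_INR 1); lia). lra. }
  destruct (lt_dec j K) as [HjK|HjK]; [apply Hsmall; [assumption|lia|assumption..|lra]|].
  pose proof (annulus_retract_norm_le j q ltac:(lia)). pose proof (HKe j ltac:(lia)). lra.
Qed.

Lemma cont_at_retraction_in_strip j q lo : cont_at (piece j) q -> continuous inv_u q ->
  lo < inv_u q < (INR j + 1) / 2 ->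
  (forall q', lo < inv_u q' -> (j <= N)%nat \/ INR j <= 2 * inv_u q') -> cont_at retraction q.
Proof.
  intros Cj Cu Hq Hlo.
  destruct (continuous_stays_between inv_u q lo ((INR j + 1) / 2) Cu Hq) as [d [Hd P]].
  apply (cont_at_glue _ (piece j) (piece j)); [assumption..|reflexivity|].
  exists d; split; [assumption|]. intros q' Hq'. specialize (P q' Hq'). left.
  apply retraction_eq_piece; [apply Hlo|]; lra.
Qed.

Lemma cont_at_retraction q : (forall k, (N < k)%nat -> q <> z k) -> cont_at retraction q.
Proof.
  intros Hz. destruct (classic (q = (0,0))) as [->|Hq]; [exact cont_at_retraction_origin|].
  pose proof (continuous_inv_u q Hq) as Cu.
  assert (Cp : forall i, cont_at (piece i) q) by (intro i; apply cont_at_piece; auto).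
  set (j := strip q).
  destruct (le_lt_dec j N) as [HjN|HjN].
  { assert (2 * inv_u q < INR j + 1) by (apply strip_le_iff; lia).
    apply (cont_at_retraction_in_strip j q (inv_u q - 1)); [auto..|lra|auto]. }
  destruct (strip_bounds q ltac:(lia)) as [Hlo Hhi]. fold j in Hlo, Hhi.
  destruct (Rlt_le_dec (INR j) (2 * inv_u q)) as [Hin|Hedge].
  { apply (cont_at_retraction_in_strip j q (INR j / 2)); [auto..|lra|]. intros. right. lra. }
  (* on the circle [X j], the pieces [j - 1] and [j] both fix [q] *)
  assert (Ej : INR (j - 1) = INR j - 1) by (rewrite minus_INR by lia; cbn; lra).
  assert (Ej' : INR (S (j - 1)) = INR j) by (f_equal; lia).
  destruct (continuous_stays_between inv_u q ((INR j - 1) / 2) ((INR j + 1) / 2) Cu)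
    as [d [Hd P]]; [lra|].
  apply (cont_at_glue _ (piece (j - 1)) (piece j)); [auto|auto| |].
  { rewrite !piece_fix by (lra || assumption). reflexivity. }
  exists d; split; [assumption|]. intros q' Hq'. specialize (P q' Hq').
  destruct (Rle_lt_dec (INR j) (2 * inv_u q')).
  - right. apply retraction_eq_piece; [right|]; lra.
  - left. apply retraction_eq_piece; [|rewrite Ej; lra].
    destruct (le_lt_dec (j - 1) N); [left; assumption|right; rewrite Ej; lra].
Qed.

End Retraction.

(** * Sequences *)

Definition strictly_increasing (phi : nat -> nat) : Prop := forall i, (phi i < phi (S i))%nat.

Lemma strictly_increasing_le phi : strictly_increasing phi ->
  forall i j, (i <= j)%nat -> (phi i <= phi j)%nat.
Proof. intros H i j Hij. induction Hij; [lia|]. specialize (H m). lia. Qed.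

Lemma strictly_increasing_ge_id phi : strictly_increasing phi -> forall i, (i <= phi i)%nat.
Proof. intros H i. induction i; [lia|]. specialize (H i). lia. Qed.

Lemma strictly_increasing_comp phi psi : strictly_increasing phi -> strictly_increasing psi ->
  strictly_increasing (fun i => phi (psi i)).
Proof.
  intros H1 H2 i. specialize (H2 i).
  pose proof (strictly_increasing_le phi H1 (S (psi i)) (psi (S i)) H2).
  specialize (H1 (psi i)). lia.
Qed.

Lemma strictly_increasing_inj phi : strictly_increasing phi -> forall i j, phi i = phi j -> i = j.
Proof.
  intros H i j E. destruct (Nat.lt_trichotomy i j) as [L|[L|L]]; [exfalso| assumption |exfalso].
  - pose proof (strictly_increasing_le phi H (S i) j L). specialize (H i). lia.
  - pose proof (strictly_increasing_le phi H (S j) i L). specialize (H j). lia.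
Qed.

Lemma dep_choice {T : Type} (P : T -> T -> Prop) (x0 : T) : (forall x, exists y, P x y) ->
  exists s : nat -> T, s 0%nat = x0 /\ forall i, P (s i) (s (S i)).
Proof.
  intros H. destruct (choice _ H) as [f Hf].
  exists (fix s i := match i with 0%nat => x0 | S i => f (s i) end). split; [reflexivity|].
  intros i. apply Hf.
Qed.

Lemma Un_cv_subseq u l phi : Un_cv u l -> strictly_increasing phi -> Un_cv (fun i => u (phi i)) l.
Proof.
  intros Hu Hphi e He. destruct (Hu e He) as [K HK]. exists K. intros n Hn.
  apply HK. pose proof (strictly_increasing_ge_id phi Hphi n). lia.
Qed.

Lemma Un_cv_const c : Un_cv (fun _ => c) c.
Proof.
  intros e He. exists 0%nat. intros n _. unfold R_dist. rewrite Rminus_diag, Rabs_R0. exact He.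
Qed.

Lemma bounded_subseq_cv (a : nat -> R) lo hi : (forall n, lo <= a n <= hi) ->
  exists phi l, strictly_increasing phi /\ Un_cv (fun i => a (phi i)) l.
Proof.
  intros Ha. destruct (Bolzano_Weierstrass a _ (compact_P3 lo hi) Ha) as [l Hl].
  assert (Step : forall p, exists p', (p < p')%nat /\ Rabs (a p' - l) < / INR (S p)).
  { intros p. assert (Hpos : 0 < / INR (S p)) by (apply Rinv_0_lt_compat, lt_0_INR; lia).
    destruct (Hl (disc l (mkposreal _ Hpos)) (S p)) as [p' [Hp' Hv]].
    { exists (mkposreal _ Hpos). intros y Hy. exact Hy. }
    exists p'. split; [lia|exact Hv]. }
  destruct (dep_choice _ 0%nat Step) as [s [_ Hs]].
  exists (fun i => s (S i)), l. split; [intro i; apply Hs|].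
  assert (Hge : forall i, (i <= s i)%nat) by (induction i; [lia|specialize (Hs i); lia]).
  intros e He. destruct (archimed_cor1 e He) as [K [HK1 HK2]]. exists K. intros n Hn.
  unfold R_dist. destruct (Hs n) as [_ Hn'].
  assert (0 < INR K) by (apply lt_0_INR; lia).
  assert (INR K <= INR (S (s n))) by (apply le_INR; specialize (Hge n); lia).
  assert (/ INR (S (s n)) <= / INR K) by (apply Rinv_le_contravar; lra). lra.
Qed.

Lemma cyl_coordinatewise_limit (x : nat -> pt3) l1 l2 l3 : (forall n, cyl (x n)) ->
  Un_cv (fun n => fst (fst (x n))) l1 -> Un_cv (fun n => snd (fst (x n))) l2 ->
  Un_cv (fun n => snd (x n)) l3 ->
  cyl ((l1, l2), l3) /\ forall e, 0 < e -> eventually (fun n => dist3 ((l1, l2), l3) (x n) < e).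
Proof.
  intros Hx C1 C2 C3. split; [split|].
  - set (r n := fst (fst (x n)) * fst (fst (x n)) + snd (fst (x n)) * snd (fst (x n))).
    assert (Hsum : Un_cv r (l1 * l1 + l2 * l2)) by (apply CV_plus; apply CV_mult; assumption).
    assert (Hone : Un_cv r 1).
    { apply (Un_cv_ext (fun _ => 1)); [|apply Un_cv_const].
      intros n. destruct (Hx n) as [E _]. unfold S1 in E. unfold r. lra. }
    unfold S1. cbn. pose proof (UL_sequence _ _ _ Hsum Hone). lra.
  - cbn. split.
    + apply Rle_cv_lim with (Un := fun _ => 0) (Vn := fun n => snd (x n));
        [|apply Un_cv_const|exact C3].
      intros n. apply Hx.
    + apply Rle_cv_lim with (Un := fun n => snd (x n)) (Vn := fun _ => 1);
        [|exact C3|apply Un_cv_const].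
      intros n. apply Hx.
  - intros e He.
    destruct (C1 (e / 3)) as [K1 HK1]; [lra|]. destruct (C2 (e / 3)) as [K2 HK2]; [lra|].
    destruct (C3 (e / 3)) as [K3 HK3]; [lra|].
    exists (Nat.max K1 (Nat.max K2 K3)). intros n Hn.
    specialize (HK1 n ltac:(lia)). specialize (HK2 n ltac:(lia)). specialize (HK3 n ltac:(lia)).
    pose proof (dist3_le_Rabs ((l1, l2), l3) (x n)) as Hd. cbn [fst snd] in Hd.
    unfold R_dist in *. rewrite Rabs_minus_sym in HK1, HK2, HK3. lra.
Qed.

Lemma cyl_seq_compact (x : nat -> pt3) : (forall n, cyl (x n)) ->
  exists psi xl, strictly_increasing psi /\ cyl xl /\
    forall e, 0 < e -> eventually (fun i => dist3 xl (x (psi i)) < e).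
Proof.
  intros Hx.
  set (c1 n := fst (fst (x n))); set (c2 n := snd (fst (x n))); set (c3 n := snd (x n)).
  assert (B : forall n, c1 n ^ 2 + c2 n ^ 2 = 1 /\ 0 <= c3 n <= 1) by (intro n; apply Hx).
  assert (B1 : forall n, -1 <= c1 n <= 1)
    by (intro n; destruct (B n); pose proof (pow2_ge_0 (c2 n)); split; nra).
  assert (B2 : forall n, -1 <= c2 n <= 1)
    by (intro n; destruct (B n); pose proof (pow2_ge_0 (c1 n)); split; nra).
  destruct (bounded_subseq_cv c1 _ _ B1) as (p1 & l1 & I1 & C1).
  destruct (bounded_subseq_cv (fun i => c2 (p1 i)) _ _ (fun i => B2 (p1 i)))
    as (p2 & l2 & I2 & C2).
  destruct (bounded_subseq_cv (fun i => c3 (p1 (p2 i))) 0 1 (fun i => proj2 (B (p1 (p2 i)))))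
    as (p3 & l3 & I3 & C3).
  exists (fun i => p1 (p2 (p3 i))), ((l1, l2), l3).
  split.
  { apply (strictly_increasing_comp p1 (fun i => p2 (p3 i))); [assumption|].
    apply strictly_increasing_comp; assumption. }
  apply cyl_coordinatewise_limit; [intro i; apply Hx| |exact (Un_cv_subseq _ l2 p3 C2 I3)|exact C3].
  apply (Un_cv_subseq (fun i => c1 (p1 i)) l1 (fun i => p2 (p3 i))); [assumption|].
  apply strictly_increasing_comp; assumption.
Qed.

(** * The topology of HA *)

Lemma Yup_mono M M' q : (M <= M')%nat -> Yup M q -> Yup M' q.
Proof.
  intros HM [HY|(i & Hi1 & Hi2 & HA)]; [left; assumption|].
  right. exists i. split; [assumption|]. split; [lia|assumption].
Qed.

Lemma outside_Yup_intA M q : HAset q -> ~ Yup M q ->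
  exists m, (M < m)%nat /\ (1 <= m)%nat /\ intA m q.
Proof.
  intros (M' & _ & [HY|(i & Hi1 & _ & [A1 A2])]) Hout; [exfalso; apply Hout; left; assumption|].
  destruct (le_lt_dec i M); [exfalso; apply Hout; right; exists i; repeat split; assumption|].
  exists i. repeat split; [assumption..| |].
  - destruct (Rle_lt_dec ((/ INR i)^2) ((fst q - / INR i)^2 + (snd q)^2)); [|assumption].
    exfalso. apply Hout. left. exists i. repeat split; [lia|assumption|]. unfold X. lra.
  - destruct (Rle_lt_dec ((fst q - / INR (S i))^2 + (snd q)^2) ((/ INR (S i))^2)); [|assumption].
    exfalso. apply Hout. left. exists (S i). repeat split; [lia..|]. unfold X. lra.
Qed.

Lemma outside_Yup_norm M q : HAset q -> ~ Yup M q -> dist2 (0,0) q <= 2 / INR (S M).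
Proof.
  intros Hq Hout. destruct (outside_Yup_intA M q Hq Hout) as (m & Hm & Hm1 & [Hin _]).
  pose proof (disk_norm_le m q Hm1 ltac:(lra)). pose proof (two_div_INR_le m (S M) ltac:(lia) Hm).
  lra.
Qed.

Lemma cont_cyl_top_seq O H x (y : nat -> pt3) :
  cont_cyl_top O H -> cyl x -> (forall j, cyl (y j)) ->
  (forall d, 0 < d -> eventually (fun j => dist3 x (y j) < d)) ->
  forall U, O U -> U (H x) -> eventually (fun j => U (H (y j))).
Proof.
  intros Hc cx cy Hy U HU HUx. destruct (Hc U HU x cx HUx) as [d [Hd Pd]].
  destruct (Hy d Hd) as [J HJ]. exists J. intros j Hj. apply Pd; [apply cy|apply HJ, Hj].
Qed.

Lemma homotopy_avoids_tail O H z : cont_cyl_top O H -> (forall x, cyl x -> HAset (H x)) ->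
  (forall p, HAset p -> ~ subseq_limit O z p) ->
  exists N, (1 <= N)%nat /\ forall x k, cyl x -> (N < k)%nat -> H x <> z k.
Proof.
  intros Hc Him Hnl. apply NNPP; intro Hno.
  assert (Step : forall a : pt3 * nat, exists b : pt3 * nat,
    (snd a < snd b)%nat /\ cyl (fst b) /\ H (fst b) = z (snd b)).
  { intros [x0 n]. apply NNPP; intro Hn. apply Hno. exists (S n). split; [lia|].
    intros x k cx Hk E. apply Hn. exists (x, k). cbn. split; [lia|split; assumption]. }
  destruct (@dep_choice (pt3 * nat) _ ((0,0), 0, 0%nat) Step) as [s [Hs0 Hs]].
  set (xs i := fst (s (S i))); set (ks i := snd (s (S i))).
  assert (Iks : strictly_increasing ks) by (intro i; apply (Hs (S i))).
  destruct (cyl_seq_compact xs (fun i => proj1 (proj2 (Hs i)))) as (psi & xl & Ipsi & cxl & Hconv).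
  apply (Hnl (H xl) (Him xl cxl)). exists (fun i => ks (psi i)). repeat split.
  - assert (Hk0 : (0 < ks 0%nat)%nat)
      by (destruct (Hs 0%nat) as [Hk0 _]; rewrite Hs0 in Hk0; exact Hk0).
    pose proof (strictly_increasing_le ks Iks 0 (psi 0%nat) ltac:(lia)). cbv beta. lia.
  - apply strictly_increasing_comp; assumption.
  - intros U HU HUx.
    destruct (cont_cyl_top_seq O H xl (fun i => xs (psi i)) Hc cxl
      (fun i => proj1 (proj2 (Hs (psi i)))) Hconv U HU HUx) as [K HK].
    exists K. intros k Hk. unfold ks; cbv beta.
    rewrite <- (proj2 (proj2 (Hs (psi k)))). apply HK, Hk.
Qed.

Section HarmonicArchipelago.

Variable O : (pt -> Prop) -> Prop.
Hypothesis HO : HA_topology O.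

Lemma Yup_open_trace N U : (1 <= N)%nat -> O U -> euc_rel_open (Yup N) (fun p => U p /\ Yup N p).
Proof.
  intros HN HU. destruct HO as (_ & Hinh & _).
  apply (Hinh N HN); [intros p Hp; apply Hp|].
  exists U. split; [assumption|]. intros p. reflexivity.
Qed.

Lemma Yup_ball_trace M p e : (1 <= M)%nat -> Yup M p -> 0 < e ->
  exists U, O U /\ U p /\ forall q, U q -> Yup M q -> dist2 p q < e.
Proof.
  intros HM Hp He. destruct HO as (_ & Hinh & _).
  set (V q := Yup M q /\ dist2 p q < e).
  assert (HV : euc_rel_open (Yup M) V).
  { split; [intros q Hq; apply Hq|]. intros q [_ Hq]. exists (e - dist2 p q). split; [lra|].
    intros q' Hq' Hqq'. split; [assumption|]. pose proof (dist2_triangle p q q'). lra. }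
  destruct (proj2 (Hinh M HM V (fun q Hq => proj1 Hq)) HV) as (U & HU & HUV).
  exists U. repeat split; [assumption| |].
  - apply HUV. split; [assumption|]. rewrite dist2_refl. assumption.
  - intros q HUq HMq. apply HUV. split; assumption.
Qed.

(* Condition (2) speaks about sequences with a term in every annulus, so the terms
   missing from the subsequence are taken from the sequence of condition (1). *)
Lemma HA_cond2_subseq (mm : nat -> nat) (w : nat -> pt) p : strictly_increasing mm ->
  (1 <= mm 0%nat)%nat -> (forall i, intA (mm i) (w i)) -> HAset p ->
  (forall U, O U -> U p -> eventually (fun i => U (w i))) -> p = (0,0).
Proof.
  intros Imm Hmm0 Hw Hp Hlim. destruct HO as (_ & _ & (z & hz & _) & Hc2).
  set (y n := match excluded_middle_informative (exists i, mm i = n) with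
              | left E => w (proj1_sig (constructive_indefinite_description _ E))
              | right _ => z n end).
  assert (Ey : forall i, y (mm i) = w i).
  { intros i. unfold y. destruct (excluded_middle_informative _) as [E|E]; [|exfalso; eauto].
    destruct (constructive_indefinite_description _ E) as [i' Hi']. cbn.
    f_equal. exact (strictly_increasing_inj mm Imm i' i Hi'). }
  apply (Hc2 y p); [|assumption|].
  - intros n Hn. unfold y. destruct (excluded_middle_informative _) as [E|E]; [|apply hz, Hn].
    destruct (constructive_indefinite_description _ E) as [i Hi]. cbn. subst n. apply Hw.
  - exists mm. repeat split; [assumption..|]. intros U HU HUp.
    destruct (Hlim U HU HUp) as [K HK]. exists K. intros k Hk. rewrite Ey. apply HK, Hk.
Qed.

Lemma HA_far_annuli_limit (w : nat -> pt) p : HAset p -> (forall j, HAset (w j)) ->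
  (forall U, O U -> U p -> eventually (fun j => U (w j))) ->
  (forall M, eventually (fun j => ~ Yup M (w j))) -> p = (0,0).
Proof.
  intros Hp Hw Hlim Hfar.
  assert (Step : forall jm : nat * nat, exists jm' : nat * nat,
    (fst jm < fst jm')%nat /\ (snd jm < snd jm')%nat /\ intA (snd jm') (w (fst jm'))).
  { intros [j m]. destruct (Hfar m) as [J HJ].
    destruct (outside_Yup_intA m (w (Nat.max J (S j))) (Hw _) (HJ _ (Nat.le_max_l _ _)))
      as (m' & Hm' & _ & Hin).
    exists (Nat.max J (S j), m'). cbn. split; [lia|split; assumption]. }
  destruct (dep_choice _ (0%nat, 0%nat) Step) as [s [Hs0 Hs]].
  set (jj i := fst (s (S i))); set (mm i := snd (s (S i))).
  assert (Ijj : strictly_increasing jj) by (intro i; apply (Hs (S i))).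
  apply (HA_cond2_subseq mm (fun i => w (jj i)) p); [intro i; apply (Hs (S i))| | |assumption|].
  - destruct (Hs 0%nat) as (_ & H0 & _). rewrite Hs0 in H0. unfold mm. cbn in *. lia.
  - intros i. apply (Hs i).
  - intros U HU HUp. destruct (Hlim U HU HUp) as [J HJ]. exists J. intros i Hi. apply HJ.
    pose proof (strictly_increasing_ge_id jj Ijj i). lia.
Qed.

(* If [H] jumps by [e] along a sequence, either infinitely many of its values lie in one
   [Yup M], whose topology is Euclidean, or they run through annuli [A m] with [m -> oo];
   then condition (2) puts their limit at the origin, which they approach in norm. *)
Lemma cont_cyl_top_euc H : cont_cyl_top O H -> (forall x, cyl x -> HAset (H x)) -> cont_cyl_euc H.
Proof.
  intros Hc Him x cx e He. apply NNPP; intro Hnot.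
  assert (Hbad : forall j, exists y, cyl y /\ dist3 x y < / INR (S j) /\ e <= dist2 (H x) (H y)).
  { intros j. apply NNPP; intro Hj. apply Hnot.
    exists (/ INR (S j)). split; [apply Rinv_0_lt_compat, lt_0_INR; lia|].
    intros y cy dy. apply Rnot_le_lt. intro. apply Hj. exists y. auto. }
  destruct (choice _ Hbad) as [y Hy].
  assert (Hlim : forall U, O U -> U (H x) -> eventually (fun j => U (H (y j)))).
  { apply cont_cyl_top_seq; [assumption..|intro j; apply Hy|].
    intros d Hd. destruct (archimed_cor1 d Hd) as [J [HJ1 HJ2]]. exists J. intros j Hj.
    destruct (Hy j) as (_ & Hyj & _).
    assert (INR J <= INR (S j)) by (apply le_INR; lia). assert (0 < INR J) by (apply lt_0_INR; lia).
    assert (/ INR (S j) <= / INR J) by (apply Rinv_le_contravar; lra). lra. }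
  destruct (Him x cx) as (M0 & HM0 & HxM0).
  destruct (classic (exists M, (M0 <= M)%nat /\ ~ eventually (fun j => ~ Yup M (H (y j)))))
    as [(M & HM & Hfreq)|Hnone].
  - destruct (Yup_ball_trace M (H x) e) as (U & HU & HUx & HUe);
      [lia|apply (Yup_mono M0); assumption|assumption|].
    destruct (Hlim U HU HUx) as [J HJ]. apply Hfreq. exists J. intros j Hj HjM.
    pose proof (HUe _ (HJ j Hj) HjM). destruct (Hy j) as (_ & _ & Hfar). lra.
  - assert (Hout : forall M, eventually (fun j => ~ Yup M (H (y j)))).
    { intros M. apply NNPP; intro HM. apply Hnone. exists (Nat.max M M0). split; [lia|].
      intros Hev. apply HM. revert Hev. apply filter_imp.
      intros j Hj HY. exact (Hj (Yup_mono M _ _ (Nat.le_max_l _ _) HY)). }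
    assert (Hx0 : H x = (0,0)).
    { apply (HA_far_annuli_limit (fun j => H (y j)));
        [apply Him, cx|intro j; apply Him, Hy|assumption..]. }
    destruct (two_div_INR_small e He) as [K [_ HKe]].
    destruct (Hout K) as [J HJ]. destruct (Hy J) as (cyJ & _ & Hfar).
    pose proof (outside_Yup_norm K (H (y J)) (Him _ cyJ) (HJ J (le_n J))).
    pose proof (HKe (S K) (Nat.le_succ_diag_r K)). rewrite Hx0 in Hfar. lra.
Qed.

Lemma cont_cyl_euc_top N H : (1 <= N)%nat -> cont_cyl_euc H -> (forall x, cyl x -> Yup N (H x)) ->
  cont_cyl_top O H.
Proof.
  intros HN Hc Him U HU x cx HUx.
  destruct (Yup_open_trace N U HN HU) as [_ Hop].
  destruct (Hop (H x) (conj HUx (Him x cx))) as [e [He Pe]].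
  destruct (Hc x cx e He) as [d [Hd Pd]].
  exists d. split; [assumption|]. intros y cy dy. apply (Pe (H y) (Him y cy) (Pd y cy dy)).
Qed.

End HarmonicArchipelago.

Lemma cont_cyl_euc_comp (g : pt -> pt) H : cont_cyl_euc H ->
  (forall x, cyl x -> cont_at g (H x)) -> cont_cyl_euc (fun x => g (H x)).
Proof.
  intros HH Hg x cx e He. destruct (Hg x cx e He) as [d1 [Hd1 P1]].
  destruct (HH x cx d1 Hd1) as [d [Hd P]].
  exists d. split; [assumption|]. intros y cy dy. apply P1, P; assumption.
Qed.

Theorem lemma4 (O : (pt -> Prop) -> Prop) (HO : HA_topology O)
  (f : pt -> pt) (hf : cont_S1 f) (hfY : forall z, S1 z -> Y 1 (f z)) :
  inessential_HA O f <-> exists N, (1 <= N)%nat /\ inessential_euc (Yup N) f.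
Proof.
  split.
  - intros (H & c & Hc & Hcont & Him & H0 & H1).
    pose proof HO as (_ & _ & (z & hz & Hnl) & _).
    destruct (homotopy_avoids_tail O H z Hcont Him Hnl) as (N & HN & Havoid).
    exists N. split; [exact HN|].
    exists (fun x => retraction z N (H x)), (retraction z N c). repeat split.
    + exact (retraction_Yup z N hz c Hc).
    + apply cont_cyl_euc_comp; [exact (cont_cyl_top_euc O HO H Hcont Him)|].
      intros x cx. apply (cont_at_retraction z N hz). intros k Hk. apply Havoid; assumption.
    + intros x cx. apply (retraction_Yup z N hz), Him, cx.
    + intros w Hw. rewrite H0 by exact Hw. apply (retraction_fix_Y z N hz), hfY, Hw.
    + intros w Hw. rewrite H1 by exact Hw. reflexivity.
  - intros (N & HN & H & c & Hc & Hcont & Him & H0 & H1).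
    exists H, c. repeat split; try assumption.
    + exists N. split; assumption.
    + exact (cont_cyl_euc_top O HO N H HN Hcont Him).
    + intros x cx. exists N. split; [assumption|]. apply Him, cx.
Qed.
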